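(* Let $d\geqslant2$, $m\geqslant1$ and $f_1,\dots,f_d\in\mathbb{Z}[X_1,\dots,X_m]$. Let $\mathcal{S}=\{(f_1(n),\dots,f_d(n)):n\in\mathbb{Z}^m\}\subseteq\mathbb{Z}^d$. Let $1\leqslant i\leqslant d$ be such that the map $f_i:\mathbb{Z}^m\to\mathbb{Z}$ is surjective, and let $\mathcal{H}_i=\{(x_1,\dots,x_d)\in\mathbb{Z}^d:x_i=0\}$. Then $\mathcal{H}_i$ is a complement of $\mathcal{S}$ in $\mathbb{Z}^d$. Moreover, if $\mathcal{S}\cap\mathcal{H}_i$ contains exactly one element, then $\mathcal{H}_i$ is a minimal complement of $\mathcal{S}$.
   Context: A nonempty $M\subseteq\mathbb{Z}^d$ is a complement of $W$ if $M+W=\mathbb{Z}^d$, and a minimal complement if no proper subset of $M$ is a complement of $W$. *)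

From HB Require Import structures.
From mathcomp Require Import all_boot all_order all_algebra.
From mathcomp Require Import mpoly.
Set Implicit Arguments. Unset Strict Implicit. Unset Printing Implicit Defensive.
Import Order.TTheory GRing.Theory Num.Theory.
Local Open Scope ring_scope.

Definition is_complement (d : nat) (M W : 'rV[int]_d -> Prop) : Prop :=
  (exists x, M x) /\
  forall z : 'rV[int]_d, exists a b, M a /\ W b /\ z = a + b.

Definition is_minimal_complement (d : nat) (M W : 'rV[int]_d -> Prop) : Prop :=
  is_complement M W /\
  forall M' : 'rV[int]_d -> Prop,
    (forall x, M' x -> M x) -> is_complement M' W -> forall x, M x -> M' x.

Definition poly_image (d m : nat) (f : 'I_d -> {mpoly int[m]}) : 'rV[int]_d -> Prop :=
  fun x => exists n : 'I_m -> int, x = \row_j (f j).@[n].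

Definition coord_hyperplane (d : nat) (i : 'I_d) : 'rV[int]_d -> Prop :=
  fun x => x ord0 i = 0.

From mathcomp Require Import all_boot all_order all_algebra.
From mathcomp Require Import mpoly.
Set Implicit Arguments. Unset Strict Implicit. Unset Printing Implicit Defensive.
Import GRing.Theory.
Local Open Scope ring_scope.

(* Every z in Z^d is z = (z - s) + s for any s in S with s_i = z_i, and
   z - s lies in H_i.  For minimality, if H_i ∩ S = {x0} and M ⊆ H_i is a
   complement, write x + x0 = a + s with a in M, x in H_i; then s lies in
   the group H_i, so s = x0 and x = a ∈ M. *)

Lemma coord_hyperplaneB (d : nat) (i : 'I_d) (x y : 'rV[int]_d) :
  coord_hyperplane i x -> coord_hyperplane i y -> coord_hyperplane i (x - y).
Proof. by rewrite /coord_hyperplane !mxE => -> ->; rewrite subr0. Qed.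

Lemma coord_hyperplane_complement (d : nat) (i : 'I_d) (W : 'rV[int]_d -> Prop) :
  (forall c : int, exists2 w, W w & w ord0 i = c) ->
  is_complement (coord_hyperplane i) W.
Proof.
move=> Wsurj; split; first by exists 0; rewrite /coord_hyperplane mxE.
move=> z; have [w Ww wi] := Wsurj (z ord0 i).
exists (z - w), w; split; last split=> //; last by rewrite subrK.
by rewrite /coord_hyperplane !mxE wi subrr.
Qed.

Lemma poly_image_coord_surj (d m : nat) (f : 'I_d -> {mpoly int[m]}) (i : 'I_d) :
  (forall c : int, exists n : 'I_m -> int, (f i).@[n] = c) ->
  forall c : int, exists2 w, poly_image f w & w ord0 i = c.
Proof.
move=> fi_surj c; have [n fn] := fi_surj c.
by exists (\row_j (f j).@[n]); [exists n | rewrite mxE].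
Qed.

Lemma minimal_complement_of_subgroup (d : nat) (H W : 'rV[int]_d -> Prop) :
  (forall x y, H x -> H y -> H (x - y)) ->
  is_complement H W -> (exists! x, W x /\ H x) ->
  is_minimal_complement H W.
Proof.
move=> subH HW [x0 [[Wx0 Hx0] x0_uniq]]; split=> // M subMH [_ MW] x Hx.
have [a [s [Ma [Ws xx0E]]]] := MW (x + x0).
have sE : s = x0 - (a - x) by rewrite opprB addrA -[x0 + x]addrC xx0E addrC addKr.
have Hs : H s by rewrite sE; apply: subH Hx0 (subH _ _ (subMH _ Ma) Hx).
have x0s : x0 = s by apply: x0_uniq.
by have -> : x = a by apply: (addIr x0); rewrite xx0E x0s addrC.
Qed.

Theorem proposition6p2 (d m : nat) (hd : (2 <= d)%N) (hm : (1 <= m)%N)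
  (f : 'I_d -> {mpoly int[m]}) (i : 'I_d)
  (hsurj : forall z : int, exists n : 'I_m -> int, (f i).@[n] = z) :
  is_complement (coord_hyperplane i) (poly_image f) /\
  ((exists! x, poly_image f x /\ coord_hyperplane i x) ->
   is_minimal_complement (coord_hyperplane i) (poly_image f)).
Proof.
have Hcompl := coord_hyperplane_complement (poly_image_coord_surj hsurj).
split=> // uniq_meet.
exact: minimal_complement_of_subgroup (@coord_hyperplaneB d i) Hcompl uniq_meet.
Qed.
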